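(* Let $2\leqslant k\leqslant m\leqslant d$ be integers such that $d\geqslant \binom{m}{k}-1+m$. Then $$n(k,d)\geqslant \left(d-\binom{m}{k}+1\right)^k\cdot\frac{\binom{m}{k}}{m^k}.$$ Consequently, for every fixed integer $k\geqslant 2$, $n(k,d)\geqslant (1-o(1))\frac{d^k}{k!}$ as $d\to\infty$.
   Context: A standard box in $\mathbb{R}^d$ is a set $K=K_1\times\cdots\times K_d$ where each $K_i\subset\mathbb{R}$ is a closed interval. For integers $1\leqslant k\leqslant d$, two standard boxes $K,L\subset\mathbb{R}^d$ are $k$-neighborly if $d-k\leqslant \dim(K\cap L)\leqslant d-1$, and a family of standard boxes is $k$-neighborly if every two distinct members are $k$-neighborly. $n(k,d)$ denotes the maximum possible cardinality of a $k$-neighborly family of standard boxes in $\mathbb{R}^d$. *)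

From mathcomp Require Import all_boot all_order all_algebra.
From mathcomp Require Import reals.
Set Implicit Arguments. Unset Strict Implicit. Unset Printing Implicit Defensive.
Import Order.TTheory GRing.Theory Num.Theory.
Local Open Scope ring_scope.

(* A standard box in R^d: coordinate i is the closed interval [(B i).1, (B i).2]. *)
Definition box (R : realType) (d : nat) := 'I_d -> R * R.

Definition is_box (R : realType) (d : nat) (B : box R d) : Prop :=
  forall i, (B i).1 < (B i).2.

Definition inter_nonempty (R : realType) (d : nat) (K L : box R d) : Prop :=
  forall i, Num.max (K i).1 (L i).1 <= Num.min (K i).2 (L i).2.

Definition inter_dim (R : realType) (d : nat) (K L : box R d) : nat :=
  #|[set i : 'I_d | Num.max (K i).1 (L i).1 < Num.min (K i).2 (L i).2]|.

(* k-neighborly: d - k <= dim (K ∩ L) <= d - 1  (dim of the empty set is -1) *)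
Definition k_neighborly (R : realType) (k d : nat) (K L : box R d) : Prop :=
  inter_nonempty K L /\ (d - k <= inter_dim K L <= d - 1)%N.

Definition neighborly_family (R : realType) (k d N : nat) (F : 'I_N -> box R d) : Prop :=
  (forall i, is_box (F i)) /\
  (forall i j : 'I_N, i != j -> k_neighborly k (F i) (F j)).

(* Words over {0, 1, *} of length at most d give boxes in [0, 2]^d, coordinatewise
   0 -> [0, 1], 1 -> [1, 2], * -> [0, 2].  Two such boxes always meet, and their
   intersection has dimension d minus the number of positions where one word reads 0
   and the other 1.  So it suffices to find C(m, k) (q + 1)^k words of length
   C(m, k) - 1 + m q any two of which conflict in at least 1 and at most k positions.
   They are indexed by partial maps f : {1..m} -> {0..q} with a k-element support S.
   The word of f starts with a "ladder" 1^r 0 *..* naming the rank r of S among the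
   k-subsets, which separates different supports by exactly one conflict, followed by
   m blocks of length q: block s is the ladder of f(s) if s is in S and *^q otherwise.
   Maps with equal supports conflict exactly where they differ (at most k times); maps
   with supports S <> S' conflict once in the prefix and at most |S :&: S'| < k times
   in the blocks.  The choice q = floor((d - C(m, k) + 1) / m) gives the first bound.
   The second follows from it for m large, using C(m, k) k! >= (m - k)^k and
   x^k - y^k <= k x^(k-1) (x - y). *)

From mathcomp Require Import all_boot all_order all_algebra.
From mathcomp Require Import reals.
From mathcomp Require Import zify ring lra.

Set Implicit Arguments.
Unset Strict Implicit.

Import Order.TTheory GRing.Theory Num.Theory.

Definition conflict (T : eqType) (x y : option T) : bool :=
  if (x, y) is (Some a, Some b) then a != b else false.

Definition nconflicts (T : eqType) (u v : seq (option T)) : nat :=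
  count (fun xy => conflict xy.1 xy.2) (zip u v).

Lemma nconflicts_cat (T : eqType) (u1 u2 v1 v2 : seq (option T)) :
  size u1 = size v1 ->
  nconflicts (u1 ++ u2) (v1 ++ v2) = nconflicts u1 v1 + nconflicts u2 v2.
Proof. by move=> eq_size; rewrite /nconflicts zip_cat // count_cat. Qed.

Lemma nconflicts_flatten (I : Type) (T : eqType) (F G : I -> seq (option T)) r :
  (forall i, size (F i) = size (G i)) ->
  nconflicts (flatten (map F r)) (flatten (map G r)) =
  \sum_(i <- r) nconflicts (F i) (G i).
Proof.
move=> eq_size; elim: r => [|i r IHr]; first by rewrite big_nil.
by rewrite /= nconflicts_cat // IHr big_cons.
Qed.

Lemma nconflicts_cons (T : eqType) (x y : option T) u v :
  nconflicts (x :: u) (y :: v) = conflict x y + nconflicts u v.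
Proof. by []. Qed.

Lemma nconflicts_nseql (T : eqType) n (v : seq (option T)) :
  nconflicts (nseq n None) v = 0.
Proof. by rewrite /nconflicts; elim: n v => [|n IHn] [|y v] //=; rewrite IHn. Qed.

Lemma nconflicts_nseqr (T : eqType) n (u : seq (option T)) :
  nconflicts u (nseq n None) = 0.
Proof. by rewrite /nconflicts; elim: n u => [|n IHn] [|[x|] u] //=; rewrite IHn. Qed.

Lemma nconflicts_nth (T : eqType) n (u v : seq (option T)) : size u <= n ->
  nconflicts u v = \sum_(0 <= t < n) conflict (nth None u t) (nth None v t).
Proof.
elim: u v n => [|x u IHu] v n.
  by case: v => [|y v] _; rewrite big1_seq // => t _; rewrite nth_nil.
case: n => [|n] //= /IHu sum_uv; rewrite big_ltn // big_add1 /=.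
case: v sum_uv => [|y v] sum_uv; last by rewrite nconflicts_cons sum_uv.
by rewrite big1_seq => [|t _]; [case: x | rewrite nth_nil; case: nth].
Qed.

Lemma card_conflicts_nth (T : eqType) d (u v : seq (option T)) : size u <= d ->
  #|[set t : 'I_d | conflict (nth None u t) (nth None v t)]| = nconflicts u v.
Proof.
move=> le_ud; rewrite (nconflicts_nth v le_ud) -sum1_card big_mkcond /=.
by rewrite big_mkord; apply: eq_bigr => t _; rewrite inE; case: conflict.
Qed.

Fixpoint ladder (n r : nat) : seq (option bool) :=
  if n is n'.+1 then
    if r is r'.+1 then Some true :: ladder n' r' else Some false :: nseq n' None
  else [::].

Lemma size_ladder n r : size (ladder n r) = n.
Proof. by elim: n r => [|n IHn] [|r] //=; rewrite ?size_nseq ?IHn. Qed.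

Lemma nconflicts_ladder n r r' :
  nconflicts (ladder n r) (ladder n r') = (r != r') && (minn r r' < n).
Proof.
elim: n r r' => [|n IHn] [|r] [|r'] /=; rewrite ?minnSS ?ltn0 ?andbF //.
- by rewrite nconflicts_cons nconflicts_nseql.
- by rewrite nconflicts_cons nconflicts_nseql.
- by rewrite nconflicts_cons nconflicts_nseqr.
- by rewrite nconflicts_cons IHn eqSS ltnS.
Qed.

Definition block (q : nat) (x : option 'I_q.+1) : seq (option bool) :=
  if x is Some a then ladder q a else nseq q None.

Lemma size_block q (x : option 'I_q.+1) : size (block x) = q.
Proof. by case: x => [a|] /=; rewrite ?size_ladder ?size_nseq. Qed.

Lemma nconflicts_block q (x y : option 'I_q.+1) :
  nconflicts (block x) (block y) = conflict x y.
Proof.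
case: x y => [a|] [b|] /=; rewrite ?nconflicts_nseql ?nconflicts_nseqr //.
rewrite nconflicts_ladder /conflict /= -(inj_eq val_inj) /=.
have := ltn_ord a; have := ltn_ord b; case: eqP => /= [|ne_ab] ? ?; lia.
Qed.

Lemma card_setI_lt (T : finType) (A B : {set T}) :
  #|A| = #|B| -> A != B -> #|A :&: B| < #|A|.
Proof.
move=> eq_card; apply: contraR; rewrite -leqNgt => le_A_AB.
have /eqP/setIidPl sub_AB : A :&: B == A by rewrite eqEcard subsetIl.
by rewrite eqEcard sub_AB eq_card leqnn.
Qed.

Section Code.

Variables m k q : nat.
Implicit Types f g : {ffun 'I_m -> option 'I_q.+1}.

Definition ksets := [set S : {set 'I_m} | #|S| == k].

Definition supp (f : {ffun 'I_m -> option 'I_q.+1}) := [set s | f s != None].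

Definition codes := [set f | #|supp f| == k].

Definition kset_index (S : {set 'I_m}) : nat := index S (enum ksets).

Definition code (f : {ffun 'I_m -> option 'I_q.+1}) : seq (option bool) :=
  ladder 'C(m, k).-1 (kset_index (supp f)) ++
  flatten [seq block (f s) | s <- enum 'I_m].

Lemma card_ksets : #|ksets| = 'C(m, k).
Proof. by rewrite card_draws card_ord. Qed.

Lemma kset_index_lt S : S \in ksets -> kset_index S < 'C(m, k).
Proof. by rewrite -mem_enum -card_ksets cardE /kset_index index_mem. Qed.

Lemma kset_index_inj : {in ksets &, injective kset_index}.
Proof. by move=> S S' S_k S'_k; apply: (index_inj S); rewrite mem_enum. Qed.

Lemma size_code f : size (code f) = 'C(m, k).-1 + m * q.
Proof.
rewrite size_cat size_ladder; congr (_ + _).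
rewrite -[in RHS](card_ord m) cardE.
by elim: (enum 'I_m) => //= s r IHr; rewrite size_cat IHr size_block mulSn.
Qed.

Lemma nconflicts_code f g : f \in codes -> g \in codes ->
  nconflicts (code f) (code g) =
  (kset_index (supp f) != kset_index (supp g)) + #|[set s | conflict (f s) (g s)]|.
Proof.
rewrite !inE => f_k g_k; rewrite nconflicts_cat ?size_ladder // nconflicts_ladder.
rewrite nconflicts_flatten => [|s]; last by rewrite !size_block.
congr (_ + _).
  have rf : kset_index (supp f) < 'C(m, k) by apply: kset_index_lt; rewrite inE.
  have rg : kset_index (supp g) < 'C(m, k) by apply: kset_index_lt; rewrite inE.
  by case: eqP => [//|ne_r] /=; lia.
rewrite big_enum /= -sum1_card [RHS]big_mkcond /=.
by apply: eq_bigr => s _; rewrite nconflicts_block inE; case: conflict.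
Qed.

Lemma supp_eq_pffun_on f S :
  (supp f == S) = (f \in pffun_on None S (predC1 None)).
Proof.
apply/eqP/pffun_onP => [<- | [/subsetP supp_sub /(_ (f _))/= im_sub]].
  split; first by apply/subsetP => s; rewrite !inE.
  by move=> _ /imageP[s s_supp ->]; rewrite !inE in s_supp *.
apply/setP => s; rewrite inE; apply/idP/idP => [/supp_sub // | s_S].
by apply: im_sub; apply/imageP; exists s.
Qed.

Lemma card_codes : #|codes| = 'C(m, k) * q.+1 ^ k.
Proof.
rewrite -sum1_card (partition_big supp (mem ksets)) => [|f]; last by rewrite !inE.
rewrite -card_ksets -sum_nat_const; apply: eq_bigr => S; rewrite !inE => /eqP card_S.
rewrite sum1dep_card.
have -> : [set f in codes | supp f == S] = [set f in pffun_on None S (predC1 None)].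
  apply/setP => f; rewrite !in_set -supp_eq_pffun_on.
  by have [-> | _] := eqVneq (supp f) S; rewrite ?card_S ?eqxx ?andbF.
by rewrite cardsE card_pffun_on cardC1 card_option card_ord card_S.
Qed.

Lemma conflicts_sub_supp f g :
  [set s | conflict (f s) (g s)] \subset supp f :&: supp g.
Proof. by apply/subsetP => s; rewrite !inE; case: (f s) (g s) => [a|] [b|]. Qed.

Lemma conflict_eq_supp f g s :
  supp f = supp g -> f s != g s -> conflict (f s) (g s).
Proof.
move/setP/(_ s); rewrite !inE.
by case: (f s) (g s) => [a|] [b|] //= _; rewrite (inj_eq Some_inj).
Qed.

Lemma nconflicts_code_bounds f g : f \in codes -> g \in codes -> f != g ->
  0 < nconflicts (code f) (code g) <= k.
Proof.
move=> f_k g_k ne_fg; rewrite nconflicts_code //.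
move: f_k g_k; rewrite !inE => /eqP f_k /eqP g_k.
have [eq_supp | ne_supp] := eqVneq (supp f) (supp g).
  rewrite eq_supp eqxx add0n; apply/andP; split.
    have [s ne_s] : exists s, f s != g s.
      apply/existsP; apply: contraR ne_fg => /existsPn eq_fg.
      by apply/eqP/ffunP => s; apply/eqP/negPn/eq_fg.
    by apply/card_gt0P; exists s; rewrite inE conflict_eq_supp.
  by rewrite -f_k subset_leq_card // (subset_trans (conflicts_sub_supp f g)) ?subsetIl.
have ne_index : kset_index (supp f) != kset_index (supp g).
  by apply: contra ne_supp => /eqP/kset_index_inj -> //; rewrite inE ?f_k ?g_k.
rewrite ne_index add1n /= -f_k.
apply: leq_ltn_trans (subset_leq_card (conflicts_sub_supp f g)) _.
by rewrite card_setI_lt // f_k g_k.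
Qed.

End Code.

Local Open Scope ring_scope.

Section Boxes.

Variable R : realType.

(* The letters 0, 1, * are [Some false], [Some true], [None]. *)
Definition letter_interval (x : option bool) : R * R :=
  match x with None => (0, 2) | Some false => (0, 1) | Some true => (1, 2) end.

Lemma letter_interval_lt x : (letter_interval x).1 < (letter_interval x).2.
Proof. by case: x => [[]|] /=; lra. Qed.

Lemma letter_interval_meet x y :
  Num.max (letter_interval x).1 (letter_interval y).1 <=
  Num.min (letter_interval x).2 (letter_interval y).2.
Proof.
by rewrite ge_max !le_min; case: x y => [[]|] [[]|] /=; repeat (apply/andP; split); lra.
Qed.

Lemma letter_interval_meet_lt x y :
  (Num.max (letter_interval x).1 (letter_interval y).1 <
   Num.min (letter_interval x).2 (letter_interval y).2) = ~~ conflict x y.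
Proof.
rewrite gt_max !lt_min /conflict.
by case: x y => [[]|] [[]|]; rewrite /= ?ltxx ?ltr01 ?ltr0n ?ltr1n ?andbF.
Qed.

End Boxes.

Definition word_box (R : realType) d (w : seq (option bool)) : box R d :=
  fun t => letter_interval R (nth None w t).
Arguments word_box : clear implicits.

Lemma inter_dim_word_box (R : realType) d u v : (size u <= d)%N ->
  inter_dim (word_box R d u) (word_box R d v) = (d - nconflicts u v)%N.
Proof.
move=> le_ud; rewrite /inter_dim -(card_conflicts_nth v le_ud).
have -> : [set t : 'I_d | Num.max (word_box R d u t).1 (word_box R d v t).1 <
                         Num.min (word_box R d u t).2 (word_box R d v t).2] =
          ~: [set t : 'I_d | conflict (nth None u t) (nth None v t)].
  by apply/setP => t; rewrite !inE letter_interval_meet_lt.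
by rewrite cardsCs setCK card_ord.
Qed.

Lemma word_boxes_neighborly (R : realType) k d N (w : 'I_N -> seq (option bool)) :
  (forall i, size (w i) <= d)%N ->
  (forall i j, i != j -> 0 < nconflicts (w i) (w j) <= k)%N ->
  neighborly_family k (fun i => word_box R d (w i)).
Proof.
move=> size_w conflicts_w; split=> [i t | i j ne_ij]; first exact: letter_interval_lt.
split=> [t | ]; first exact: letter_interval_meet.
by rewrite inter_dim_word_box //; have := conflicts_w i j ne_ij; lia.
Qed.

Lemma code_boxes_neighborly (R : realType) k m q d :
  ('C(m, k).-1 + m * q <= d)%N ->
  exists F : 'I_('C(m, k) * q.+1 ^ k) -> box R d, neighborly_family k F.
Proof.
move=> le_d; rewrite -card_codes.
exists (fun i => word_box R d (code k (enum_val i))).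
apply: word_boxes_neighborly => [i | i j ne_ij]; first by rewrite size_code.
apply: nconflicts_code_bounds; rewrite ?enum_valP //.
by apply: contra ne_ij => /eqP/enum_val_inj ->.
Qed.

Lemma neighborly_family_lower_bound (R : realType) k m d :
  (0 < k <= m)%N -> ('C(m, k) <= d)%N ->
  exists N (F : 'I_N -> box R d), neighborly_family k F /\
    (d - 'C(m, k) + 1)%:R ^+ k * ('C(m, k)%:R / m%:R ^+ k) <= N%:R :> R.
Proof.
move=> /andP[k_gt0 le_km] le_Cd.
have C_gt0 : (0 < 'C(m, k))%N by rewrite bin_gt0.
have m_gt0 : (0 < m)%N by apply: leq_trans le_km.
set n := (d - 'C(m, k) + 1)%N; set q := (n %/ m)%N.
have le_mq_n : (m * q <= n)%N by rewrite mulnC leq_divM.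
have [|F famF] := @code_boxes_neighborly R k m q d.
  by move: le_mq_n; rewrite /n; lia.
exists _, F; split => //.
have mk_gt0 : 0 < m%:R ^+ k :> R by rewrite exprn_gt0 ?ltr0n.
rewrite mulrA ler_pdivrMr // -!natrX -!natrM ler_nat mulnC -mulnA leq_mul2l.
by apply/orP; right; rewrite -expnMn leq_exp2r //; apply/ltnW/ltn_ceil.
Qed.

Lemma expn_sub_le_ffact n m : ((n - m) ^ m <= n ^_ m)%N.
Proof.
have -> : ((n - m) ^ m = \prod_(i < m) (n - m))%N by rewrite prod_nat_const card_ord.
by rewrite ffact_prod; apply: leq_prod => i _; rewrite leq_sub2l // ltnW.
Qed.

Lemma subrXX_le (R : numDomainType) (x y : R) n : 0 <= y <= x ->
  x ^+ n - y ^+ n <= n%:R * x ^+ n.-1 * (x - y).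
Proof.
case/andP=> y_ge0 le_yx; have x_ge0 := le_trans y_ge0 le_yx.
rewrite subrXX mulrC ler_wpM2r ?subr_ge0 //.
have term_le (i : 'I_n) : x ^+ (n.-1 - i) * y ^+ i <= x ^+ n.-1.
  have le_i : (i <= n.-1)%N by have := ltn_ord i; lia.
  rewrite -{2}(subnK le_i) exprD ler_wpM2l ?exprn_ge0 //.
  by apply: lerXn2r; rewrite ?nnegrE.
have -> : n%:R * x ^+ n.-1 = \sum_(i < n) x ^+ n.-1.
  by rewrite sumr_const card_ord mulr_natl.
by apply: ler_sum => i _; apply: term_le.
Qed.

Lemma one_sub_mulr_le_expr (R : realDomainType) (x y eps : R) n : (0 < n)%N ->
  0 <= y <= x -> n%:R * (x - y) <= eps * x -> (1 - eps) * x ^+ n <= y ^+ n.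
Proof.
move=> n_gt0 yx le_eps; have := subrXX_le n yx.
have x_ge0 : 0 <= x by case/andP: yx => y0 /(le_trans y0).
have := ler_wpM2l (exprn_ge0 n.-1 x_ge0) le_eps.
have -> : x ^+ n = x ^+ n.-1 * x by rewrite -exprSr prednK.
lra.
Qed.

Lemma defect_le (R : realDomainType) (eps k m d c : R) :
  0 <= k <= m -> 1 <= c -> 0 <= d ->
  2 * k ^+ 2 <= eps * m -> 2 * k * c <= eps * d ->
  k * (d * m - (d - c + 1) * (m - k)) <= eps * (d * m).
Proof.
case/andP=> k_ge0 le_km c_ge1 d_ge0 le_m le_d.
have := ler_wpM2r d_ge0 le_m; have := ler_wpM2r (le_trans k_ge0 le_km) le_d.
have : k * ((c - 1) * (m - k)) <= k * (c * m) by apply: ler_wpM2l => //; nra.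
nra.
Qed.

Lemma binomial_lower_bound_asymptotic (R : realFieldType) (eps : R) k m d :
  (0 < k <= m)%N -> ('C(m, k) <= d)%N ->
  2 * k%:R ^+ 2 <= eps * m%:R -> 2 * k%:R * 'C(m, k)%:R <= eps * d%:R ->
  (1 - eps) * (d%:R ^+ k / k`!%:R) <=
  (d - 'C(m, k) + 1)%:R ^+ k * ('C(m, k)%:R / m%:R ^+ k).
Proof.
move=> /andP[k_gt0 le_km] le_Cd le_m le_d.
set C := 'C(m, k) in le_Cd le_d *; set n := (d - C + 1)%N.
have C_gt0 : (0 < C)%N by rewrite bin_gt0.
have C_ge1 : 1 <= C%:R :> R by rewrite ler1n.
have nE : n%:R = d%:R - C%:R + 1 :> R by rewrite natrD natrB.
have mkE : (m - k)%:R = m%:R - k%:R :> R by rewrite natrB.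
have fact_gt0 : 0 < k`!%:R :> R by rewrite ltr0n fact_gt0.
have mk_gt0 : 0 < m%:R ^+ k :> R by rewrite exprn_gt0 // ltr0n (leq_trans k_gt0).
have ffactR : (m - k)%:R ^+ k <= C%:R * k`!%:R :> R.
  by rewrite -natrX -natrM ler_nat bin_ffact expn_sub_le_ffact.
have le_xy : k%:R * (d%:R * m%:R - n%:R * (m - k)%:R) <= eps * (d%:R * m%:R) :> R.
  by rewrite nE mkE; apply: defect_le; rewrite ?ler0n ?ler_nat.
have yx : 0 <= (n%:R : R) * (m - k)%:R <= d%:R * m%:R.
  rewrite mulr_ge0 ?ler0n //=.
  by apply: ler_pM; rewrite ?ler0n // ler_nat ?leq_subr // /n; lia.
have key : (1 - eps) * (d%:R ^+ k * m%:R ^+ k) <= n%:R ^+ k * (C%:R * k`!%:R).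
  rewrite -exprMn; apply: le_trans (one_sub_mulr_le_expr k_gt0 yx le_xy) _.
  by rewrite exprMn ler_wpM2l ?exprn_ge0 ?ler0n.
rewrite -(ler_pM2r (mulr_gt0 mk_gt0 fact_gt0)).
have lhsE : (1 - eps) * (d%:R ^+ k / k`!%:R) * (m%:R ^+ k * k`!%:R) =
            (1 - eps) * (d%:R ^+ k * m%:R ^+ k) :> R.
  by field; rewrite lt0r_neq0.
have rhsE : n%:R ^+ k * (C%:R / m%:R ^+ k) * (m%:R ^+ k * k`!%:R) =
            n%:R ^+ k * (C%:R * k`!%:R) :> R.
  by field; rewrite lt0r_neq0.
by rewrite lhsE rhsE.
Qed.

Lemma exists_ler_mulrn (R : archiRealFieldType) (c eps : R) : 0 < eps ->
  exists M, forall n, (M <= n)%N -> c <= eps * n%:R.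
Proof.
move=> eps_gt0; exists (Num.bound (`|c| / eps)) => n le_Mn.
have := archi_boundP (divr_ge0 (normr_ge0 c) (ltW eps_gt0)).
rewrite ltr_pdivrMr // => lt_c.
apply: le_trans (ler_norm c) (le_trans (ltW lt_c) _).
by rewrite mulrC ler_pM2l // ler_nat.
Qed.

Lemma neighborly_family_asymptotic (R : realType) k (eps : R) :
  (0 < k)%N -> 0 < eps ->
  exists D, forall d, (D <= d)%N ->
    exists N (F : 'I_N -> box R d), neighborly_family k F /\
      (1 - eps) * (d%:R ^+ k / k`!%:R) <= N%:R.
Proof.
move=> k_gt0 eps_gt0.
have [M le_M] := exists_ler_mulrn (2 * k%:R ^+ 2) eps_gt0.
pose m := maxn k M.
have [D le_D] := exists_ler_mulrn (2 * k%:R * 'C(m, k)%:R) eps_gt0.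
exists (maxn 'C(m, k) D) => d; rewrite geq_max => /andP[le_Cd le_Dd].
have le_km : (0 < k <= m)%N by rewrite k_gt0 leq_maxl.
have [N [F [famF boundF]]] := neighborly_family_lower_bound R le_km le_Cd.
exists N, F; split=> //; apply: le_trans boundF.
by apply: binomial_lower_bound_asymptotic => //; [apply: le_M; rewrite leq_maxr | exact: le_D].
Qed.

Theorem theorem2 (R : realType) :
  (forall k m d : nat, (2 <= k)%N -> (k <= m)%N -> (m <= d)%N ->
     ('C(m, k) - 1 + m <= d)%N ->
     exists (N : nat) (F : 'I_N -> box R d),
       @neighborly_family R k d N F /\
       ((d - 'C(m, k) + 1)%:R ^+ k * ('C(m, k)%:R / m%:R ^+ k) <= N%:R :> R))
  /\
  (forall k : nat, (2 <= k)%N ->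
     forall eps : R, 0 < eps ->
     exists D : nat, forall d : nat, (D <= d)%N ->
       exists (N : nat) (F : 'I_N -> box R d),
         @neighborly_family R k d N F /\
         (1 - eps) * (d%:R ^+ k / (k`!)%:R) <= N%:R).
Proof.
split=> [k m d k_ge2 le_km _ le_d | k k_ge2 eps eps_gt0].
  apply: neighborly_family_lower_bound; first by rewrite (leq_trans _ k_ge2).
  by move: le_d; have := leq_trans k_ge2 le_km; lia.
exact: neighborly_family_asymptotic (leq_trans _ k_ge2) eps_gt0.
Qed.
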